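(* Let $N$ be a galled tree on $\mathcal{X}$ with at least two galls, let $\mathcal{G}$ be a finite set of genes, let $G:\mathcal{X}\to 2^{\mathcal{G}}$ be a genome assignment and let $k$ be a positive integer. Let $u_1$, $N_1$, $Q_1$ and the extension of $G$ to the leaves $q_1$ and $v_1$ be as in the context. Then $N$ admits a $(G,k)$-gene labelling if and only if each of $N_1$ and $Q_1$ admits a $(G,k)$-gene labelling (with respect to the extended genome assignment on their respective leaf sets).
   Context: A digraph is rooted if it has a vertex $\rho$ of indegree zero such that every vertex is reachable from $\rho$ by a directed path. A phylogenetic network on $\mathcal{X}$ is a rooted acyclic digraph whose root has outdegree at least two, in which every vertex $v$ of outdegree $1$ has indegree at least $2$, and whose set of outdegree-zero vertices (leaves) is $\mathcal{X}$. A galled tree is a phylogenetic network in which any two distinct cycles of the underlying undirected graph have disjoint vertex sets (each such cycle is a gall). A genome assignment is any map from the leaf set to $2^{\mathcal{G}}$. A $(G,k)$-gene labelling of a network $M=(V,A)$ with leaf set $L$ is a map $F:V\to 2^{\mathcal{G}}$ with (I) $F(x)=G(x)$ for all $x\in L$; (II) $|F(v)|\le k$ for all $v\in V$; (III) for each $g\in\mathcal{G}$, the sub-digraph induced by $\{v\in V: g\in F(v)\}$ is rooted. Construction: $u_1$ is a vertex of $N$ such that, for some gall, every vertex of that gall is a descendant of $u_1$ (reachable from $u_1$ by a directed path), and no proper descendant of $u_1$ has this property. $N_1$ is obtained from $N$ by replacing $u_1$ together with all its descendants by a single new leaf $q_1$. $Q_1$ is obtained from $N$ by deleting all vertices that are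 not descendants of $u_1$ and adding a new root $r_1$ with exactly two children, $u_1$ and a new leaf $v_1$. Let $L_{Q_1}$ be the leaf set of $Q_1$, and set $G(q_1)=G(v_1)=\big(\bigcup_{x\in L_{Q_1}\setminus\{v_1\}}G(x)\big)\cap\big(\bigcup_{x\in\mathcal{X}\setminus L_{Q_1}}G(x)\big)$. *)

From HB Require Import structures.
From mathcomp Require Import all_boot.
Set Implicit Arguments. Unset Strict Implicit. Unset Printing Implicit Defensive.

Section Digraph.
Variables (V : finType) (A : rel V).

Definition indeg (v : V) := #|[set u | A u v]|.
Definition outdeg (v : V) := #|[set w | A v w]|.
Definition is_leaf (v : V) := outdeg v == 0.

Definition desc (u v : V) := connect A u v.

Definition dg_acyclic := forall x y, A x y -> ~~ connect A y x.
Definition rooted_at (rho : V) := indeg rho = 0 /\ forall v, connect A rho v.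
Definition dg_rooted := exists rho, rooted_at rho.

Definition phylo_network :=
  [/\ dg_rooted, dg_acyclic,
      (forall rho, rooted_at rho -> 2 <= outdeg rho) &
      (forall v, outdeg v = 1 -> 2 <= indeg v)].

Definition uadj : rel V := fun x y => A x y || A y x.
Definition gall (c : seq V) := [&& uniq c, 3 <= size c & cycle uadj c].
Definition same_cycle (c1 c2 : seq V) :=
  exists n, c2 = rot n c1 \/ c2 = rot n (rev c1).

Definition galled_tree :=
  phylo_network /\
  forall c1 c2, gall c1 -> gall c2 -> ~ same_cycle c1 c2 -> [disjoint c1 & c2].

Definition gall_below (u : V) := exists c, gall c /\ all (desc u) c.

Definition induced_rel (S : {set V}) : rel V :=
  fun x y => [&& x \in S, y \in S & A x y].
Definition induced_rooted (S : {set V}) :=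
  exists2 rho, rho \in S &
    (forall x, x \in S -> ~~ A x rho) /\
    (forall v, v \in S -> connect (induced_rel S) rho v).

Variable Gene : finType.

Definition gene_labelling (G : V -> {set Gene}) (k : nat) (F : V -> {set Gene}) :=
  [/\ (forall x, is_leaf x -> F x = G x),
      (forall v, #|F v| <= k) &
      (forall g, [set v | g \in F v] != set0 ->
                 induced_rooted [set v | g \in F v])].

Definition admits_labelling (G : V -> {set Gene}) (k : nat) :=
  exists F, gene_labelling G k F.
End Digraph.

Section Construction.
Variables (V : finType) (A : rel V) (Gene : finType) (G : V -> {set Gene}) (u1 : V).

(* N_1 : non-descendants of u1, plus the new leaf q1 = None *)
Definition N1V := option {v : V | ~~ desc A u1 v}.
Definition N1A : rel N1V := fun a b =>
  match a, b with
  | Some x, Some y => A (val x) (val y)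
  | Some x, None => [exists w, desc A u1 w && A (val x) w]
  | None, _ => false
  end.

(* Q_1 : descendants of u1 (inl), plus r1 = inr true and v1 = inr false *)
Definition Q1V := ({v : V | desc A u1 v} + bool)%type.
Definition Q1A : rel Q1V := fun a b =>
  match a, b with
  | inl x, inl y => A (val x) (val y)
  | inr true, inl y => val y == u1
  | inr true, inr false => true
  | _, _ => false
  end.

Definition Gnew : {set Gene} :=
  (\bigcup_(x | is_leaf A x && desc A u1 x) G x) :&:
  (\bigcup_(x | is_leaf A x && ~~ desc A u1 x) G x).

Definition G_N1 (a : N1V) : {set Gene} :=
  match a with Some x => G (val x) | None => Gnew end.
Definition G_Q1 (a : Q1V) : {set Gene} :=
  match a with inl x => G (val x) | inr false => Gnew | inr true => set0 end.
End Construction.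

From HB Require Import structures.
From mathcomp Require Import all_boot.
From Stdlib Require Import Classical.
Set Implicit Arguments. Unset Strict Implicit. Unset Printing Implicit Defensive.

(* Write D for the set of descendants of u1.  The only property of N the
   transfer of labellings needs, besides acyclicity, is that every arc
   entering D from outside ends at u1 ([entry_at_u1]).  It rests on a fact
   about acyclic digraphs: two directed paths from a common vertex to two
   distinct in-neighbours of a vertex w close up into a gall ([close_gall]).
   Applied below u1 and combined with the minimality of u1, this shows that
   some gall through u1 lies in D ([gall_through_u1]); applied to an arc
   x -> w entering D at w <> u1, it produces a gall through x and u1, which
   then coincides with that gall, forcing x into D.

   Given this entry property, a labelling F of N restricts to N1 and Q1 by
   labelling q1, r1, v1 with G(q1), which F(u1) contains ([Gnew_sub_F_u1]).
   Conversely, labellings F1 of N1 and F2 of Q1 glue to the labelling equal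
   to F2 on D and F1 outside D, each intersected with the genes occurring at
   leaves on its side ([glue]); a gene occurring on both sides lies in G(q1)
   and is routed from the outer part through an arc into u1, which replaces
   the arc into q1 of N1. *)

Section PathFacts.
Variables (T : finType) (e : rel T).

Lemma connect_first_step x y :
  connect e x y -> x != y -> exists2 z, e x z & connect e z y.
Proof.
move=> /connectP [[|z p] /= pp ->]; first by rewrite eqxx.
by case/andP: pp => exz pz _; exists z => //; apply/connectP; exists p.
Qed.

Lemma connect_last_step x y :
  connect e x y -> x != y -> exists2 z, connect e x z & e z y.
Proof.
move=> /connectP [p pp ->]; case/lastP: p pp => [|p z] /=; first by rewrite eqxx.
rewrite rcons_path last_rcons => /andP [pp ez] _; exists (last x p) => //.
by apply/connectP; exists p.
Qed.

Lemma path_connect_last x s y : path e x s -> y \in x :: s -> connect e y (last x s).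
Proof.
move=> pp yin; case/splitPl: yin pp => s1 s2 ly.
by rewrite cat_path last_cat ly => /andP [_ p2]; apply/connectP; exists s2.
Qed.

Lemma acyclic_path_uniq : (forall x y, e x y -> ~~ connect e y x) ->
  forall x s, path e x s -> uniq (x :: s).
Proof.
move=> acyc x s; elim: s x => [|y s IH] x //= /andP [exy pys].
have /= /andP [-> ->] := IH _ pys; rewrite !andbT.
by apply/negP => xs; have := acyc _ _ exy; rewrite (path_connect pys xs).
Qed.

Lemma path_suffix x s pre y suf : path e x s -> x :: s = pre ++ y :: suf ->
  path e y suf /\ last x s = last y suf.
Proof.
case: pre => [|z pre] /= pp; first by case=> <- <-.
case=> ez es; subst z s; move: pp; rewrite cat_path last_cat /=.
by case/andP=> _ /andP [_ ->].
Qed.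

Lemma path_prefix_connect x s pre y suf v : path e x s ->
  x :: s = pre ++ y :: suf -> v \in pre -> connect e v y.
Proof.
case: pre => [|z pre] //= pp [ez es] vin; subst z s; move: pp.
rewrite -cat_rcons cat_path => /andP [pp _].
have := path_connect_last pp; rewrite last_rcons; apply.
by rewrite -cats1 -cat_cons mem_cat vin.
Qed.

Lemma leafP x : is_leaf e x <-> forall y, ~~ e x y.
Proof.
rewrite /is_leaf /outdeg cards_eq0; split.
  by move=> /eqP H y; apply/negP => exy; have := in_set0 y; rewrite -H inE exy.
by move=> H; apply/eqP/setP => y; rewrite !inE; exact/negbTE/H.
Qed.

Lemma induced_connect (S : {set T}) x y :
  connect (induced_rel e S) x y -> connect e x y.
Proof. by apply: connect_sub => a b /and3P [_ _ /connect1]. Qed.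
End PathFacts.

Lemma last_occurrence (T : Type) (a : pred T) (s : seq T) : has a s ->
  exists pre y suf, [/\ s = pre ++ y :: suf, a y & ~~ has a suf].
Proof.
elim: s => [|x s IH] //=; case: (boolP (has a s)) => [/IH [pre [y [suf [-> ay hs]]]] _| hs].
  by exists (x :: pre), y, suf.
by rewrite orbF => ax; exists [::], x, s.
Qed.

Section Transport.
Variables (T T' : finType) (e : rel T) (e' : rel T') (f : T -> T') (P : pred T).

Lemma connect_transport :
  (forall a b, P a -> e a b -> P b /\ e' (f a) (f b)) ->
  forall x y, P x -> connect e x y -> connect e' (f x) (f y).
Proof.
move=> H x y Px /connectP [p pp ->]; elim: p x Px pp => [|z p IH] x Px //=.
case/andP=> exz pz; have [Pz e'z] := H _ _ Px exz.
exact: connect_trans (connect1 e'z) (IH _ Pz pz).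
Qed.

Lemma connect_transport_rev :
  (forall a b, P b -> e a b -> P a /\ e' (f a) (f b)) ->
  forall x y, P y -> connect e x y -> connect e' (f x) (f y).
Proof.
move=> H x y Py /connectP [p pp ey]; subst y; move: Py.
suff: P (last x p) -> P x /\ connect e' (f x) (f (last x p)) by move=> h /h [].
elim: p x pp => [|z p IH] x /=; first by [].
case/andP=> exz pz /(IH _ pz) [Pz cz]; have [Px e'x] := H _ _ Pz exz.
by split => //; exact: connect_trans (connect1 e'x) cz.
Qed.
End Transport.

Lemma connect_preserves (T : finType) (e : rel T) (P : pred T) :
  (forall a b, P a -> e a b -> P b) -> forall x y, P x -> connect e x y -> P y.
Proof.
move=> H x y Px /connectP [p pp ->]; elim: p x Px pp => [|z p IH] x Px //=.
by case/andP=> exz pz; exact: IH _ (H _ _ Px exz) pz.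
Qed.

Section AcyclicGalls.
Variables (V : finType) (A : rel V).
Hypothesis acyc : dg_acyclic A.

(* Every nonempty vertex list contains a vertex with no out-arc into the list:
   take one with the fewest descendants. *)
Lemma exists_sink_in (c : seq V) x0 : x0 \in c ->
  exists2 z, z \in c & forall y, y \in c -> ~~ A z y.
Proof.
move=> x0c.
case: (arg_minnP (P := fun v => v \in c) (fun v => #|[set y | connect A v y]|) x0c).
move=> z zc zmin; exists z => // y yc; apply/negP => azy.
have := zmin y yc; rewrite leqNgt => /negP; apply.
apply: proper_card; apply/properP; split.
  by apply/subsetP => v; rewrite !inE; exact: connect_trans (connect1 azy).
exists z; rewrite !inE ?connect0 //; apply/negP => cyz.
by have := acyc azy; rewrite cyz.
Qed.

(* Every gall has a reticulation: a vertex z with two distinct in-neighbours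
   on the gall, namely the two cycle neighbours of a sink of the gall. *)
Lemma gall_sink c : gall A c -> exists z a b,
  [/\ z \in c, a \in c, b \in c, a != b & A a z /\ A b z].
Proof.
case/and3P=> uc sc cc.
have [x0 x0c] : exists x, x \in c.
  by case: c {uc cc} sc => [|x c'] //; exists x; rewrite mem_head.
have [z zc zsink] := exists_sink_in x0c.
have [rest hr] : exists rest, rot (index z c) c = z :: rest by eexists; exact: rot_index.
have cyc : cycle (uadj A) (z :: rest) by rewrite -hr rot_cycle.
have uq : uniq (z :: rest) by rewrite -hr rot_uniq.
have sz : size (z :: rest) = size c by rewrite -hr size_rot.
have mc : {subset z :: rest <= c} by move=> y; rewrite -hr mem_rot.
case: rest {hr} cyc uq sz mc => [|a [|y r]] cyc uq sz mc; try by rewrite -sz in sc.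
move: cyc; rewrite /= rcons_path => /and4P [uza _ _ ubz].
have ac : a \in c by apply: mc; rewrite !inE eqxx orbT.
have bc : last y r \in c by apply: mc; rewrite 2!in_cons mem_last !orbT.
exists z, a, (last y r); split => //.
  by case/and3P: uq => _ anr _; apply: contraNneq anr => ->; rewrite mem_last.
move: uza ubz; rewrite /uadj (negbTE (zsink _ ac)) (negbTE (zsink _ bc)) orbF /=.
by move=> -> ->.
Qed.

Lemma two_paths_gall t m s w :
  path A t m -> path A t s -> A (last t m) w -> A (last t s) w ->
  last t m != last t s -> (forall v, v \in s -> v \notin t :: m) ->
  gall A (t :: m ++ w :: rev s).
Proof.
move=> pm ps apw aqw npq disj.
have um := acyclic_path_uniq acyc pm; have us := acyclic_path_uniq acyc ps.
have wm : w \notin t :: m.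
  by apply/negP => /(path_connect_last pm) c; have := acyc apw; rewrite c.
have ws : w \notin t :: s.
  by apply/negP => /(path_connect_last ps) c; have := acyc aqw; rewrite c.
apply/and3P; split.
- rewrite -cat_cons cat_uniq um /= rev_uniq.
  apply/and3P; split; last by case/andP: us.
  + apply/negP => /orP [wm'|/hasP [v]]; first by rewrite wm' in wm.
    by rewrite mem_rev => /disj /negbTE ->.
  + by rewrite mem_rev; apply: contra ws => ws'; rewrite inE ws' orbT.
- have : size m + size s != 0.
    by case: m s npq {pm ps apw aqw um us wm ws disj} => [|? ?] [|? ?]; rewrite ?eqxx.
  by rewrite /= size_cat /= size_rev addnS !ltnS lt0n.
- rewrite /cycle rcons_cat cat_path; apply/andP; split.
    by apply: sub_path pm => a b ab; rewrite /uadj ab.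
  rewrite rcons_cons /= {1}/uadj apw /= -rev_cons lastI rev_rcons /=.
  rewrite {1}/uadj aqw orbT /= rev_path.
  by apply: sub_path ps => a b ab; rewrite /uadj ab orbT.
Qed.

(* Two directed paths from t0 ending at distinct in-neighbours p, q of w yield
   a gall through p and w below its top vertex t; t is taken as the last
   vertex of the second path lying on the first, so t is on the first path
   and is reached from every vertex of the second path off the gall. *)
Lemma close_gall (t0 p q w : V) (s1 s2 : seq V) :
  path A t0 s1 -> last t0 s1 = p -> path A t0 s2 -> last t0 s2 = q ->
  A p w -> A q w -> p != q ->
  exists t c, [/\ gall A c, t \in c, p \in c, w \in c &
   [/\ (forall v, v \in c -> connect A t v), t \in t0 :: s1 &
       forall v, v \in t0 :: s2 -> v \notin c -> connect A v t]].
Proof.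
move=> p1 l1 p2 l2 apw aqw npq.
have meet : has (mem (t0 :: s1)) (t0 :: s2) by rewrite /= mem_head.
have [pre [t [post [e2 tin hpost]]]] := last_occurrence meet.
have [pre1 [mid1 e1]] : exists pre1 mid1, t0 :: s1 = pre1 ++ t :: mid1.
  by case/splitPr: tin => pre1 mid1; exists pre1, mid1.
have [pm lm] := path_suffix p1 e1; have [pp lp] := path_suffix p2 e2.
rewrite l1 in lm; rewrite l2 in lp.
have sub1 : {subset t :: mid1 <= t0 :: s1} by move=> v vin; rewrite e1 mem_cat vin orbT.
have disj : forall v, v \in post -> v \notin t :: mid1.
  move=> v vp; apply/negP => /sub1 vs.
  by move/hasPn: hpost => /(_ v vp); rewrite /= vs.
have gc : gall A (t :: mid1 ++ w :: rev post).
  by apply: two_paths_gall pm pp _ _ _ disj; rewrite -?lm -?lp.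
exists t, (t :: mid1 ++ w :: rev post); split => //.
- exact: mem_head.
- by rewrite lm -cat_cons mem_cat mem_last.
- by rewrite -cat_cons mem_cat mem_head orbT.
split.
- move=> v; rewrite -cat_cons mem_cat => /orP [/(path_connect pm) //|].
  rewrite inE mem_rev => /orP [/eqP ->|vp].
    apply: connect_trans (connect1 apw); rewrite lm.
    exact: path_connect_last pm (mem_head _ _).
  by apply: (path_connect pp); rewrite inE vp orbT.
- by apply: sub1; exact: mem_head.
- move=> v; rewrite e2 mem_cat => /orP [vpre _|]; first exact: path_prefix_connect p2 e2 vpre.
  rewrite inE => /orP [/eqP -> _ //|vp].
  by rewrite -cat_cons mem_cat !in_cons mem_rev vp !orbT.
Qed.
End AcyclicGalls.

Section GalledTree.
Variables (V : finType) (A : rel V).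
Hypothesis gtree : galled_tree A.

Lemma galled_tree_acyclic : dg_acyclic A.
Proof. by case: gtree => [[]]. Qed.

Lemma galls_meeting_agree c1 c2 x :
  gall A c1 -> gall A c2 -> x \in c1 -> x \in c2 -> c1 =i c2.
Proof.
move=> g1 g2 x1 x2; case: (classic (same_cycle c1 c2)) => [[n [->|->]] y | ns].
- by rewrite mem_rot.
- by rewrite mem_rot mem_rev.
- by have := gtree.2 c1 c2 g1 g2 ns => /disjointFr /(_ x1); rewrite x2.
Qed.

Variable u1 : V.
Hypothesis below_u1 : gall_below A u1.
Hypothesis u1_lowest : forall w, desc A u1 w -> w != u1 -> ~ gall_below A w.

(* Some gall through u1 lies below u1: the paths from u1 to the two parents of
   the reticulation of a gall below u1 close up into the same gall, whose top
   vertex is a descendant of u1 lying above the whole gall, hence is u1. *)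
Lemma gall_through_u1 : exists c, [/\ gall A c, u1 \in c & all (desc A u1) c].
Proof.
have acyc := galled_tree_acyclic.
case: below_u1 => c' [gc' dc'].
have [z [a [b [zc ac bc nab [az bz]]]]] := gall_sink acyc gc'.
have /connectP [s1 ps1 l1] : desc A u1 a by move/allP: dc' => /(_ a ac).
have /connectP [s2 ps2 l2] : desc A u1 b by move/allP: dc' => /(_ b bc).
have [t [c [gc tc _ zc' [top ts1 _]]]] :=
  close_gall acyc ps1 (esym l1) ps2 (esym l2) az bz nab.
have same := galls_meeting_agree gc' gc zc zc'.
case: (eqVneq t u1) => [etu | ntu]; first by exists c'; split => //; rewrite same -etu.
exfalso; apply: (u1_lowest (path_connect ps1 ts1) ntu).
by exists c; split => //; apply/allP => v /top.
Qed.

(* For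
   an arc x -> w with w <> u1, close the root paths to x and, through u1, to
   the parent q of w on a path u1 ~> w into a gall; it contains u1 (else u1
   would reach its top and hence x), so it meets the gall of
   [gall_through_u1], coincides with it and puts x below u1. *)
Lemma entry_at_u1 x w : A x w -> ~~ desc A u1 x -> desc A u1 w -> w = u1.
Proof.
have acyc := galled_tree_acyclic.
move=> axw ndx dw; apply/eqP; apply/negPn/negP => nw.
have [q cq aqw] : exists2 q, desc A u1 q & A q w.
  by apply: connect_last_step dw _; rewrite eq_sym.
have nxq : x != q by apply: contraNneq ndx => ->.
case: gtree => [[[rho [_ reach]] _ _ _] _].
have /connectP [s1 ps1 l1] := reach x.
have /connectP [sa psa la] := reach u1.
have /connectP [sb psb lb] := cq.
have ps2 : path A rho (sa ++ sb) by rewrite cat_path psa -la psb.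
have l2 : last rho (sa ++ sb) = q by rewrite last_cat -la.
have u1_on : u1 \in rho :: sa ++ sb by rewrite -cat_cons mem_cat la mem_last.
have [t [c [gc _ xc _ [top _ above_t]]]] := close_gall acyc ps1 (esym l1) ps2 l2 axw aqw nxq.
have u1c : u1 \in c.
  apply: contraNT ndx => /(above_t _ u1_on) u1t.
  exact: connect_trans u1t (top x xc).
have [c0 [gc0 u1c0 below0]] := gall_through_u1.
have x0 : x \in c0 by rewrite -(galls_meeting_agree gc gc0 u1c u1c0).
by move/allP: below0 => /(_ x x0); rewrite (negbTE ndx).
Qed.
End GalledTree.

Section Transfer.
Variables (V : finType) (A : rel V) (Gene : finType) (G : V -> {set Gene}).
Variables (k : nat) (u1 : V).
Hypothesis acyc : dg_acyclic A.
Hypothesis entry : forall x w, A x w -> ~~ desc A u1 x -> desc A u1 w -> w = u1.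

Local Notation D := (desc A u1).
Local Notation N1 := (@N1A V A u1).
Local Notation Q1 := (@Q1A V A u1).
Local Notation Gn := (@Gnew V A Gene G u1).

Lemma desc_arc x y : D x -> A x y -> D y.
Proof. by move=> dx /connect1; exact: connect_trans. Qed.

Lemma leaf_N1 (x : {v | ~~ D v}) : is_leaf N1 (Some x) <-> is_leaf A (val x).
Proof.
split=> /leafP H; apply/leafP => y.
  apply/negP => axy; case: (boolP (D y)) => dy.
    by have /existsPn /(_ y) := H None; rewrite dy axy.
  by have := H (Some (exist _ y dy)); rewrite /= axy.
case: y => [y|] /=; first exact: H.
by apply/existsPn => w; rewrite (negbTE (H w)) andbF.
Qed.

Lemma leaf_Q1 (x : {v | D v}) : is_leaf Q1 (inl x) <-> is_leaf A (val x).
Proof.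
split=> /leafP H; apply/leafP => y.
  apply/negP => axy; have dy := desc_arc (valP x) axy.
  by have := H (inl (exist _ y dy)); rewrite /= axy.
by case: y => [y|[]] //=; exact: H.
Qed.

Lemma leaf_q1 : is_leaf N1 None.
Proof. by apply/leafP. Qed.

Lemma leaf_v1 : is_leaf Q1 (inr false).
Proof. by apply/leafP => -[]. Qed.

Lemma not_leaf_r1 : ~ is_leaf Q1 (inr true).
Proof. by move/leafP => /(_ (inr false)). Qed.

(* Vertices of N viewed in Q1 (vertices outside D are sent to v1). *)
Definition embQ (v : V) : @Q1V V A u1 :=
  if insub v is Some y then inl y else inr false.

Lemma embQ_val (y : {v | D v}) : embQ (val y) = inl y.
Proof. by rewrite /embQ valK. Qed.

Definition u1Q : {v | D v} := exist _ u1 (connect0 A u1).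

Lemma enter_through_u1 (S : {set V}) x y :
  connect (induced_rel A S) x y -> ~~ D x -> D y ->
  exists z, [/\ ~~ D z, connect (induced_rel A S) x z, induced_rel A S z u1
              & connect (induced_rel A S) u1 y].
Proof.
move=> /connectP [p pp ->]; elim: p x pp => [|z p IH] x /=.
  by move=> _ /negbTE ->.
case/andP => exz pz ndx dl; case: (boolP (D z)) => dz.
  have ez : z = u1 by apply: entry ndx dz; case/and3P: exz.
  by exists x; split => //; [rewrite -ez | apply/connectP; exists p; rewrite -?ez].
have [z' [nz cz iz cu]] := IH z pz dz dl.
by exists z'; split => //; exact: connect_trans (connect1 exz) cz.
Qed.

Section Restriction.
Variable F : V -> {set Gene}.
Hypothesis HF : gene_labelling A G k F.

Local Notation carriers g := [set v | g \in F v].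

(* A gene of G(q1) sits at a leaf outside D, so every vertex reaching all its
   carriers lies outside D. *)
Lemma Gnew_root_outside g rho :
  g \in Gn -> (forall v, v \in carriers g -> connect (induced_rel A (carriers g)) rho v) ->
  ~~ D rho.
Proof.
case: HF => leafF _ _; rewrite /Gnew inE => /andP [_ /bigcupP [b /andP [lb db] gb]] reach.
apply: contra db => dr; apply: connect_trans dr (induced_connect (reach b _)).
by rewrite inE leafF.
Qed.

(* F(u1) contains G(q1): the carriers of such a gene are rooted outside D and
   reach a leaf inside D, hence pass through u1. *)
Lemma Gnew_sub_F_u1 : Gn \subset F u1.
Proof.
case: HF => leafF _ rootedF; apply/subsetP => g gG.
have [a /andP [la da] ga] : exists2 a, is_leaf A a && D a & g \in G a.
  by move: gG; rewrite /Gnew inE => /andP [/bigcupP [a] ? ? _]; exists a.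
have aS : a \in carriers g by rewrite inE leafF.
have [rho _ [_ reach]] : induced_rooted A (carriers g).
  by apply: rootedF; apply/set0Pn; exists a.
have [_ [_ _ /and3P [_ u1S _] _]] :=
  enter_through_u1 (reach a aS) (Gnew_root_outside gG reach) da.
by rewrite inE in u1S.
Qed.

Lemma card_Gnew : #|Gn| <= k.
Proof. by case: HF => _ cardF _; exact: leq_trans (subset_leq_card Gnew_sub_F_u1) (cardF u1). Qed.

Definition restrict_N1 (a : N1V A u1) : {set Gene} :=
  if a is Some x then F (val x) else Gn.
Definition restrict_Q1 (a : @Q1V V A u1) : {set Gene} :=
  if a is inl x then F (val x) else Gn.

Local Notation carriers_N1 g := [set a | g \in restrict_N1 a].
Local Notation carriers_Q1 g := [set a | g \in restrict_Q1 a].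

Lemma restrict_N1_arc g a b : ~~ D b -> induced_rel A (carriers g) a b ->
  ~~ D a /\ induced_rel N1 (carriers_N1 g) (insub a) (insub b).
Proof.
move=> ndb /and3P [aS bS ab].
have nda : ~~ D a by apply: contra ndb => da; exact: desc_arc da ab.
split => //; rewrite (insubT (fun v => ~~ D v) nda) (insubT (fun v => ~~ D v) ndb).
by rewrite /induced_rel !inE /=; rewrite !inE in aS bS; rewrite aS bS ab.
Qed.

(* The carriers of a gene in N1 are rooted at the root of its carriers in N,
   which lies outside D; q1 is reached through the arc entering u1. *)
Lemma restrict_N1_labelling : gene_labelling N1 (@G_N1 V A Gene G u1) k restrict_N1.
Proof.
case: HF => leafF cardF rootedF; split.
- by case=> [x|] //= /leaf_N1 /leafF.
- by case=> [x|] /=; [exact: cardF | exact: card_Gnew].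
move=> g /set0Pn [a0 a0S].
have u1S : g \in Gn -> u1 \in carriers g by move=> gG; rewrite inE (subsetP Gnew_sub_F_u1).
have [rho rS [noin reach]] : induced_rooted A (carriers g).
  apply: rootedF; apply/set0Pn; move: a0S; rewrite inE.
  case: a0 => [x|] /= gx; first by exists (val x); rewrite inE.
  by exists u1; exact: u1S.
have ndr : ~~ D rho.
  move: a0S; rewrite inE; case: a0 => [x|] /= gx; last exact: Gnew_root_outside gx reach.
  have xS : val x \in carriers g by rewrite inE.
  by apply: contra (valP x) => dr; exact: connect_trans dr (induced_connect (reach _ xS)).
have [r er] : exists r : {v | ~~ D v}, rho = val r by exists (exist _ rho ndr).
subst rho; exists (Some r); first by rewrite inE /=; rewrite inE in rS.
split.
- by case=> [y|] //; rewrite inE /= => gy; apply: noin; rewrite inE.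
case=> [y|]; rewrite inE /= => gy.
  have yS : val y \in carriers g by rewrite inE.
  have := connect_transport_rev (@restrict_N1_arc g) (valP y) (reach _ yS).
  by rewrite !valK.
have [z [ndz cz /and3P [zS _ az] _]] :=
  enter_through_u1 (reach u1 (u1S gy)) (valP r) (connect0 _ _).
apply: (connect_trans (y := insub z)).
  by have := connect_transport_rev (@restrict_N1_arc g) ndz cz; rewrite valK.
apply: connect1; rewrite (insubT (fun v => ~~ D v) ndz).
apply/and3P; split; [by rewrite !inE in zS * | by rewrite inE |].
by apply/existsP; exists u1; rewrite az andbT.
Qed.

Lemma restrict_Q1_arc g a b : D a -> induced_rel A (carriers g) a b ->
  D b /\ induced_rel Q1 (carriers_Q1 g) (embQ a) (embQ b).
Proof.
move=> da /and3P [aS bS ab]; have db := desc_arc da ab; split => //.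
have [a' ea] : exists a' : {v | D v}, a = val a' by exists (exist _ a da).
have [b' eb] : exists b' : {v | D v}, b = val b' by exists (exist _ b db).
subst a b.
by rewrite !embQ_val /induced_rel !inE /=; rewrite !inE in aS bS; rewrite aS bS.
Qed.

(* A gene of G(q1) is carried by r1, which reaches its inner carriers through u1. *)
Lemma restrict_Q1_rooted_shared g : g \in Gn -> induced_rooted Q1 (carriers_Q1 g).
Proof.
case: HF => _ _ rootedF gG.
have r1S : inr true \in carriers_Q1 g by rewrite inE.
exists (inr true) => //; split; first by case=> [x|[]].
case=> [y|[]] yS; last 2 first.
- exact: connect0.
- by apply: connect1; rewrite /induced_rel r1S yS.
have yS' : val y \in carriers g by rewrite !inE in yS *.
have [rho _ [_ reach]] : induced_rooted A (carriers g).
  by apply: rootedF; apply/set0Pn; exists (val y).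
have [z [_ _ /and3P [_ u1S _] cu]] :=
  enter_through_u1 (reach _ yS') (Gnew_root_outside gG reach) (valP y).
apply: (connect_trans (y := inl u1Q)).
  by apply: connect1; rewrite /induced_rel r1S /= eqxx andbT inE; rewrite inE in u1S.
have := connect_transport (@restrict_Q1_arc g) (connect0 A u1) cu.
by rewrite (embQ_val u1Q) embQ_val.
Qed.

(* Any other gene is carried in Q1 only inside D, from a carrier reaching all
   inner carriers: the root of its carriers in N if that lies in D, else u1. *)
Lemma restrict_Q1_rooted_inner g : g \notin Gn -> carriers_Q1 g != set0 ->
  induced_rooted Q1 (carriers_Q1 g).
Proof.
case: HF => _ _ rootedF gG /set0Pn [[y0|b] y0S]; last by rewrite inE /= (negbTE gG) in y0S.
have y0S' : val y0 \in carriers g by rewrite !inE in y0S *.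
have [rho rhoS [_ reach]] : induced_rooted A (carriers g).
  by apply: rootedF; apply/set0Pn; exists (val y0).
have [r [dr rS reach_r]] : exists r, [/\ D r, r \in carriers g &
    forall y, y \in carriers g -> D y -> connect (induced_rel A (carriers g)) r y].
  case: (boolP (D rho)) => [drho | ndrho]; first by exists rho; split => // y /reach.
  have [_ [_ _ /and3P [_ u1S _] _]] := enter_through_u1 (reach _ y0S') ndrho (valP y0).
  exists u1; split => // y yS dy.
  by have [_ [_ _ _ ?]] := enter_through_u1 (reach _ yS) ndrho dy.
have [r' er] : exists r' : {v | D v}, r = val r' by exists (exist _ r dr).
subst r; exists (inl r'); first by rewrite !inE in rS *.
split; case=> [y|b] yS; try by rewrite inE /= (negbTE gG) in yS.
  have yS' : val y \in carriers g by rewrite !inE in yS *.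
  apply/negP => /= ayr; have := acyc ayr; apply/negP/negPn.
  exact: induced_connect (reach_r _ yS' (valP y)).
have yS' : val y \in carriers g by rewrite !inE in yS *.
have := connect_transport (@restrict_Q1_arc g) (valP r') (reach_r _ yS' (valP y)).
by rewrite !embQ_val.
Qed.

Lemma restrict_Q1_labelling : gene_labelling Q1 (@G_Q1 V A Gene G u1) k restrict_Q1.
Proof.
case: HF => leafF cardF _; split.
- by case=> [x|[]] /=; [move/leaf_Q1/leafF | move/not_leaf_r1 | ].
- by case=> [x|b] /=; [exact: cardF | exact: card_Gnew].
move=> g ne; case: (boolP (g \in Gn)) => gG.
  exact: restrict_Q1_rooted_shared.
exact: restrict_Q1_rooted_inner.
Qed.
End Restriction.

Lemma Q1_inner_root (S2 : {set @Q1V V A u1}) x0 : induced_rooted Q1 S2 -> inl x0 \in S2 ->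
  exists r : {v | D v}, [/\ inl r \in S2,
    (forall y, inl y \in S2 -> connect (induced_rel Q1 S2) (inl r) (inl y)),
    (forall y, inl y \in S2 -> ~~ A (val y) (val r)) &
    (inr false \in S2 -> val r = u1)].
Proof.
case=> rho rhoS [noin reach] x0S.
have from_v1 b : connect (induced_rel Q1 S2) (inr false) b -> b = inr false.
  move=> c; case: (eqVneq (inr false) b) => [//|nb].
  by have [[z|[]] /and3P [_ _ ?] _] := connect_first_step c nb.
have from_old x b : connect (induced_rel Q1 S2) (inl x) b -> is_inl b.
  apply: (connect_preserves (P := is_inl)) => //.
  by case=> [a|//] [c|[]] _ // /and3P [].
case: rho rhoS noin reach => [r|[]] rS noin reach.
- exists r; split => // [y | y yS | vS]; [exact: reach | exact: noin (inl y) yS |].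
  by have := from_old _ _ (reach _ vS).
- have via_u1 y : inl y \in S2 -> exists z : {v | D v},
      [/\ val z = u1, inl z \in S2 & connect (induced_rel Q1 S2) (inl z) (inl y)].
    move=> yS; have [[z|[]] /and3P [_ zS az] cz] := connect_first_step (reach _ yS) isT.
    + by exists z; split => //; exact/eqP.
    + by [].
    + by have := from_v1 _ cz.
  have [z [ez zS _]] := via_u1 _ x0S.
  exists z; split => // [y yS | y yS].
    have [z' [ez' _ cz']] := via_u1 _ yS.
    by rewrite (_ : z = z') //; apply: val_inj; rewrite ez ez'.
  apply/negP => ayz; have := acyc ayz; rewrite ez; exact/negP/negPn/(valP y).
- by have := from_v1 _ (reach _ x0S).
Qed.

Lemma N1_outer_root (S1 : {set N1V A u1}) x0 : induced_rooted N1 S1 -> Some x0 \in S1 ->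
  exists r : {v | ~~ D v}, [/\ Some r \in S1,
    (forall y, Some y \in S1 -> connect (induced_rel N1 S1) (Some r) (Some y)),
    (forall y, Some y \in S1 -> ~~ A (val y) (val r)) &
    (None \in S1 -> exists x, [/\ Some x \in S1,
        connect (induced_rel N1 S1) (Some r) (Some x) & A (val x) u1])].
Proof.
case=> [[r|] rS [noin reach]] x0S; last first.
  by have [? /and3P [_ _ //]] := connect_first_step (reach _ x0S) isT.
exists r; split => // [y | y yS | qS]; [exact: reach | exact: noin (Some y) yS |].
have [[z|] cz /and3P [zS _ azq]] := connect_last_step (reach _ qS) isT; last by [].
have /existsP [w /andP [dw azw]] := azq.
have ew := entry azw (valP z) dw; subst w.
by exists z.
Qed.

Section Gluing.
Variables (F1 : N1V A u1 -> {set Gene}) (F2 : @Q1V V A u1 -> {set Gene}).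
Hypothesis H1 : gene_labelling N1 (@G_N1 V A Gene G u1) k F1.
Hypothesis H2 : gene_labelling Q1 (@G_Q1 V A Gene G u1) k F2.

Definition genes_inside := \bigcup_(x | is_leaf A x && D x) G x.
Definition genes_outside := \bigcup_(x | is_leaf A x && ~~ D x) G x.

Definition glue (v : V) : {set Gene} :=
  if D v then F2 (embQ v) :&: genes_inside else F1 (insub v) :&: genes_outside.

Local Notation carriers g := [set v | g \in glue v].
Local Notation carriers1 g := [set a | g \in F1 a].
Local Notation carriers2 g := [set a | g \in F2 a].

Lemma glue_inside (y : {v | D v}) g :
  (val y \in carriers g) = (inl y \in carriers2 g) && (g \in genes_inside).
Proof. by rewrite !inE /glue (valP y : D (val y)) embQ_val inE. Qed.

Lemma glue_outside (y : {v | ~~ D v}) g :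
  (val y \in carriers g) = (Some y \in carriers1 g) && (g \in genes_outside).
Proof. by rewrite !inE /glue (negbTE (valP y : ~~ D (val y))) valK inE. Qed.

Lemma F1_q1 : F1 None = Gn.
Proof. by case: H1 => leaf1 _ _; exact: leaf1 None leaf_q1. Qed.

Lemma F2_v1 : F2 (inr false) = Gn.
Proof. by case: H2 => leaf2 _ _; exact: leaf2 (inr false) leaf_v1. Qed.

Lemma glue_leaves x : is_leaf A x -> glue x = G x.
Proof.
case: H1 H2 => leaf1 _ _ [leaf2 _ _] lx; rewrite /glue.
case: (boolP (D x)) => dx.
  pose y : {v | D v} := exist _ x dx.
  rewrite -[x]/(val y) embQ_val (leaf2 (inl y)) /=; last exact/leaf_Q1.
  by apply/setIidPl; apply: (bigcup_sup x); rewrite lx ?dx.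
pose y : {v | ~~ D v} := exist _ x dx.
rewrite -[x]/(val y) valK (leaf1 (Some y)) /=; last exact/leaf_N1.
by apply/setIidPl; apply: (bigcup_sup x); rewrite lx ?dx.
Qed.

Lemma glue_card v : #|glue v| <= k.
Proof.
case: H1 H2 => _ card1 _ [_ card2 _]; rewrite /glue.
by case: (D v); apply: leq_trans (subset_leq_card (subsetIl _ _)) _.
Qed.

Lemma glue_connect_N1 g (x y : {v | ~~ D v}) : g \in genes_outside ->
  connect (induced_rel N1 (carriers1 g)) (Some x) (Some y) ->
  connect (induced_rel A (carriers g)) (val x) (val y).
Proof.
move=> gO; pose f (a : N1V A u1) := if a is Some z then val z else u1.
apply: (connect_transport_rev (f := f) (P := isSome)) => //.
case=> [a|] [b|] // _ /and3P [aS bS ab]; split => //.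
by rewrite /induced_rel !glue_outside aS bS gO.
Qed.

Lemma glue_connect_Q1 g (x y : {v | D v}) : g \in genes_inside ->
  connect (induced_rel Q1 (carriers2 g)) (inl x) (inl y) ->
  connect (induced_rel A (carriers g)) (val x) (val y).
Proof.
move=> gI; pose f (a : @Q1V V A u1) := if a is inl z then val z else u1.
apply: (connect_transport (f := f) (P := is_inl)) => //.
case=> [a|//] [b|[]] // _ /and3P [aS bS ab]; split => //.
by rewrite /induced_rel !glue_inside aS bS gI.
Qed.

(* A gene occurring on both sides is in G(q1), so in Q1 its carriers are
   rooted at u1; an arc of N into u1 then links the outer carriers to the
   inner ones, replacing the arc into q1 of N1. *)
Lemma glue_connect_across g (x : {v | ~~ D v}) (v : {v | D v}) :
  g \in genes_outside -> Some x \in carriers1 g -> A (val x) u1 ->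
  val v \in carriers g -> connect (induced_rel A (carriers g)) (val x) (val v).
Proof.
case: H2 => _ _ rooted2 gO xS axu; rewrite glue_inside => /andP [vS gI].
have v1S : inr false \in carriers2 g by rewrite inE F2_v1 /Gnew inE gI gO.
have ne : carriers2 g != set0 by apply/set0Pn; exists (inl v).
have [r [rS reach _ /(_ v1S) ru1]] := Q1_inner_root (rooted2 g ne) vS.
apply: connect_trans (glue_connect_Q1 gI (reach _ vS)).
apply: connect1; rewrite /induced_rel glue_outside xS gO glue_inside rS gI ru1.
exact: axu.
Qed.

(* A gene occurring at a leaf outside D is rooted at the root of its
   F1-carriers, an old vertex outside D. *)
Lemma glue_rooted_outside g : g \in genes_outside -> induced_rooted A (carriers g).
Proof.
case: H1 => leaf1 _ rooted1 gO.
have [b /andP [lb db] gb] := bigcupP gO.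
pose b' : {v | ~~ D v} := exist _ b db.
have bS : Some b' \in carriers1 g by rewrite inE leaf1 //; exact/leaf_N1.
have ne : carriers1 g != set0 by apply/set0Pn; exists (Some b').
have [r [rS reach noin via_q1]] := N1_outer_root (rooted1 g ne) bS.
exists (val r); first by rewrite glue_outside rS gO.
split => [y yS | v vS].
  apply/negP => ayr; case: (boolP (D y)) => dy.
    by have := desc_arc dy ayr; rewrite (negbTE (valP r)).
  pose y' : {v | ~~ D v} := exist _ y dy.
  move: yS ayr; rewrite -[y]/(val y') glue_outside => /andP [yS _].
  by apply/negP; exact: noin.
case: (boolP (D v)) => dv; last first.
  pose v' : {v | ~~ D v} := exist _ v dv.
  move: vS; rewrite -[v]/(val v') glue_outside => /andP [vS _].
  exact: glue_connect_N1 gO (reach _ vS).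
pose v' : {v | D v} := exist _ v dv.
move: (vS); rewrite -[v]/(val v') glue_inside => /andP [_ gI].
have q1S : None \in carriers1 g by rewrite inE F1_q1 /Gnew inE gI gO.
have [x [xS rx axu]] := via_q1 q1S.
exact: connect_trans (glue_connect_N1 gO rx) (glue_connect_across (v := v') gO xS axu vS).
Qed.

(* Any other gene is carried only inside D and is rooted at the root of its
   F2-carriers among the old vertices. *)
Lemma glue_rooted_inside g : g \notin genes_outside -> carriers g != set0 ->
  induced_rooted A (carriers g).
Proof.
case: H2 => _ _ rooted2 gO ne.
have inside v : v \in carriers g -> exists2 v' : {v | D v}, v = val v' & inl v' \in carriers2 g.
  move=> vS; case: (boolP (D v)) => dv.
    pose v' : {v | D v} := exist _ v dv; exists v' => //.
    by move: vS; rewrite -[v]/(val v') glue_inside => /andP [].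
  pose v' : {v | ~~ D v} := exist _ v dv.
  by move: vS; rewrite -[v]/(val v') glue_outside (negbTE gO) andbF.
have [v0 v0S] := set0Pn _ ne; have [v0' ev0 v0S2] := inside _ v0S.
have gI : g \in genes_inside by move: v0S; rewrite ev0 glue_inside => /andP [].
have ne2 : carriers2 g != set0 by apply/set0Pn; exists (inl v0').
have [r [rS reach noin _]] := Q1_inner_root (rooted2 g ne2) v0S2.
exists (val r); first by rewrite glue_inside rS gI.
split => [y /inside [y' -> yS] | y /inside [y' -> yS]]; first exact: noin.
exact: glue_connect_Q1 gI (reach _ yS).
Qed.

Lemma glue_labelling : gene_labelling A G k glue.
Proof.
split; [exact: glue_leaves | exact: glue_card | move=> g ne].
by case: (boolP (g \in genes_outside)) => gO;
  [exact: glue_rooted_outside | exact: glue_rooted_inside].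
Qed.
End Gluing.
End Transfer.

Theorem lemma5p4 (V : finType) (A : rel V) (Gene : finType)
  (G : V -> {set Gene}) (k : nat) (u1 : V) :
  galled_tree A ->
  (exists c1 c2, [/\ gall A c1, gall A c2 & ~ same_cycle c1 c2]) ->
  0 < k ->
  gall_below A u1 ->
  (forall w, desc A u1 w -> w != u1 -> ~ gall_below A w) ->
  (admits_labelling A G k <->
   admits_labelling (@N1A V A u1) (@G_N1 V A Gene G u1) k /\
   admits_labelling (@Q1A V A u1) (@G_Q1 V A Gene G u1) k).
Proof.
move=> gtree _ _ below_u1 u1_lowest.
have acyc := galled_tree_acyclic gtree.
have entry := entry_at_u1 gtree below_u1 u1_lowest.
split.
- case=> F HF; split.
  + by eexists; apply: (restrict_N1_labelling entry); exact: HF.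
  + by eexists; apply: (restrict_Q1_labelling acyc entry); exact: HF.
- case=> [[F1 H1] [F2 H2]].
  by eexists; apply: (glue_labelling acyc entry); [exact: H1 | exact: H2].
Qed.
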